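(* Let $\mathcal{R}$ be a right amenable cell space with finite stabiliser $G_0$, let $(\mathcal{R},Q,N,\delta)$ be a semi-cellular automaton with $Q$ finite, $N$ finite, whose global transition function is $\Delta$, and let $\mathcal{F}=(F_i)_{i\in I}$ be a right Følner net in $\mathcal{R}$. Suppose $\delta$ is $\bullet$-invariant, $Q$ contains at least two elements, and $\Delta$ is not surjective. Then $\mathrm{h}_{\mathcal{F}}(\Delta(Q^M))<\log|Q|$.
   Context: A cell space $\mathcal{R}$ consists of a group $G$ acting transitively on the left on a nonempty set $M$ via $\triangleright$, a point $m_0\in M$ and a family $(g_{m_0,m})_{m\in M}$ in $G$ with $g_{m_0,m}\triangleright m_0=m$. $G_0$ is the stabiliser of $m_0$, $G/G_0$ the set of left cosets, with $G$ acting by $g\cdot hG_0=ghG_0$. The right semi-action $\triangleleft\colon M\times G/G_0\to M$ is $m\triangleleft gG_0=g_{m_0,m}g\triangleright m_0$. $\mathcal{R}$ is right amenable if there is a finitely additive probability measure $\mu$ on the power set of $M$ such that $\mu(\{a\triangleleft\mathfrak{g}:a\in A\})=\mu(A)$ whenever $\mathfrak{g}\in G/G_0$, $A\subseteq M$ and $m\mapsto m\triangleleft\mathfrak{g}$ is injective on $A$. A right Følner net in $\mathcal{R}$ is a net $(F_i)_{i\in I}$ (over a directed set) of nonempty finite subsets of $M$ with $\lim_{i}\frac{|F_i\setminus\{m: m\triangleleft\mathfrak{g}\in F_i\}|}{|F_i|}=0$ for every $\mathfrak{g}\in G/G_0$. A semi-cellular automaton is $(\mathcal{R},Q,N,\delta)$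 with $Q$ a set, $N\subseteq G/G_0$ with $G_0\cdot N\subseteq N$, $\delta\colon Q^N\to Q$; its global transition function is $\Delta(c)(m)=\delta(n\mapsto c(m\triangleleft n))$. $\delta$ is $\bullet$-invariant if $\delta(g_0\bullet\ell)=\delta(\ell)$ for all $g_0\in G_0$, $\ell\in Q^N$, where $(g_0\bullet\ell)(n)=\ell(g_0^{-1}\cdot n)$. For $A\subseteq M$, $\pi_A\colon Q^M\to Q^A$ is restriction. For $X\subseteq Q^M$, $\mathrm{h}_{\mathcal{F}}(X)=\limsup_{i\in I}\frac{\log|\pi_{F_i}(X)|}{|F_i|}$. *)

From HB Require Import structures.
From mathcomp Require Import all_boot all_order all_algebra.
From mathcomp Require Import all_classical all_reals.
From mathcomp Require Import ereal exp.
Set Implicit Arguments. Unset Strict Implicit. Unset Printing Implicit Defensive.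
Import Order.TTheory GRing.Theory Num.Theory.
Local Open Scope classical_set_scope.
Local Open Scope ring_scope.

Record group := Group {
  gcar :> Type;
  gmul : gcar -> gcar -> gcar;
  gone : gcar;
  ginv : gcar -> gcar;
  gmulA : forall x y z, gmul x (gmul y z) = gmul (gmul x y) z;
  gmul1 : forall x, gmul gone x = x;
  gmulV : forall x, gmul (ginv x) x = gone }.

(* A cell space: G acts transitively on the left on a nonempty set M, a point
   m0 and a family (g_{m0,m})_m with g_{m0,m} |> m0 = m (which forces
   transitivity). *)
Record cell_space := CellSpace {
  csG : group;
  csM : Type;
  cact : csG -> csM -> csM;
  cact1 : forall m, cact (gone csG) m = m;
  cactM : forall g h m, cact (gmul g h) m = cact g (cact h m);
  cm0 : csM;
  cg : csM -> csG;
  cgP : forall m, cact (cg m) cm0 = m }.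

Section CellSpaceDefs.
Variable R : cell_space.
Local Notation G := (csG R).
Local Notation M := (csM R).

Definition stab : set G := [set g | cact g (cm0 R) = cm0 R].

Definition lcoset (g : G) : set G :=
  [set h | exists g0, stab g0 /\ h = gmul g g0].

Definition coset := {S : set G | exists g, S = lcoset g}.

Definition crepr (c : coset) : G := projT1 (cid (proj2_sig c)).

Definition coset_act (g : G) (c : coset) : coset :=
  exist _ (lcoset (gmul g (crepr c))) (ex_intro _ _ erefl).

(* right semi-action m <| gG_0 = g_{m0,m} g |> m0 (independent of the
   representative g) *)
Definition rsa (m : M) (c : coset) : M := cact (gmul (cg m) (crepr c)) (cm0 R).

Definition fa_prob {K : realType} (mu : set M -> K) :=
  [/\ forall A, 0 <= mu A, mu setT = 1 &
      forall A B, A `&` B = set0 -> mu (A `|` B) = mu A + mu B].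

Definition right_amenable (K : realType) :=
  exists mu : set M -> K, fa_prob mu /\
    forall (c : coset) (A : set M),
      {in A &, injective (fun m => rsa m c)} ->
      mu [set rsa a c | a in A] = mu A.

Definition global {Q : Type} {N : set coset} (delta : ({n | N n} -> Q) -> Q)
  (c : M -> Q) : M -> Q :=
  fun m => delta (fun n => c (rsa m (proj1_sig n))).

(* delta is bullet-invariant: delta (g0 . l) = delta l, where
   (g0 . l)(n) = l (g0^{-1} . n) *)
Definition bullet_invariant {Q : Type} {N : set coset}
  (delta : ({n | N n} -> Q) -> Q) :=
  forall (g0 : G) (l l' : {n | N n} -> Q), stab g0 ->
    (forall n n' : {n | N n},
        proj1_sig n' = coset_act (ginv g0) (proj1_sig n) -> l' n = l n') ->
    delta l' = delta l.

End CellSpaceDefs.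
Arguments stab : clear implicits.

(* cardinality of a (finite) set; 0 when the set is infinite *)
Definition fincard {T : Type} (S : set T) : nat := xget 0%N [set n | (S #= `I_n)%card].

Definition restr {M Q : Type} (A : set M) (c : M -> Q) : {m | A m} -> Q :=
  fun x => c (proj1_sig x).

Definition proj_set {M Q : Type} (A : set M) (X : set (M -> Q)) :=
  [set @restr M Q A c | c in X].

Definition directed {I : Type} (le : I -> I -> Prop) :=
  [/\ (exists i : I, True), (forall i, le i i),
      (forall i j k, le i j -> le j k -> le i k) &
      (forall i j, exists k, le i k /\ le j k)].

Definition net_lim0 {K : realType} {I : Type} (le : I -> I -> Prop) (a : I -> K) :=
  forall eps : K, 0 < eps -> exists i0, forall i, le i0 i -> `|a i| < eps.

Definition net_limsup {K : realType} {I : Type} (le : I -> I -> Prop) (a : I -> K)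
  : \bar K :=
  ereal_inf [set ereal_sup [set (a i)%:E | i in le i0] | i0 in [set: I]].

Definition right_folner (R : cell_space) (K : realType) {I : Type}
  (le : I -> I -> Prop) (F : I -> set (csM R)) :=
  [/\ forall i, finite_set (F i) /\ F i !=set0 &
      forall c : coset R,
        net_lim0 le (fun i =>
          (fincard (F i `\` [set m | F i (rsa m c)]))%:R / (fincard (F i))%:R
            : K)].

Definition entropy (K : realType) {M Q : Type} {I : Type} (le : I -> I -> Prop)
  (F : I -> set M) (X : set (M -> Q)) : \bar K :=
  net_limsup le (fun i => ln ((fincard (@proj_set M Q (F i) X))%:R : K)
                          / (fincard (F i))%:R).

From HB Require Import structures.
From mathcomp Require Import all_boot all_order all_algebra.
From mathcomp Require Import all_classical all_reals ereal exp finmap unstable.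
From mathcomp Require Import zify ring lra.
Set Implicit Arguments. Unset Strict Implicit. Unset Printing Implicit Defensive.
Import Order.TTheory GRing.Theory Num.Theory.

(* Since [delta] is bullet-invariant, the global map commutes with the
   translations [c |-> c \o cact g], so its image [X] is translation invariant.
   If it is not surjective, compactness of [Q^M] yields a finite orphan
   pattern: a finite [A] and [p] such that no configuration of [X] agrees with
   the translate of [p] on any translate [g_(m0,m) A].  In a Folner set [F] at
   least half of the cells [m] have their translate of [A] inside [F]; as [G_0]
   is finite, each translate meets at most [|A|^2 |G_0|] others, so a greedy
   choice gives [k >= |F| / (2 |A|^2 |G_0|)] pairwise disjoint translates in
   [F].  On each of them [X] shows at most [|Q|^|A| - 1] patterns, whence
   [|pi_F(X)| <= |Q|^(|F| - k|A|) (|Q|^|A| - 1)^k], and [log |pi_F(X)| / |F|]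
   stays below [log |Q|] by a fixed margin. *)

Lemma card_bigcup_seq_disjoint (I : eqType) (T : finType) (B : I -> {set T}) (js : seq I) :
  pairwise (fun i j => [disjoint B i & B j]) js ->
  #|\bigcup_(j <- js) B j| = (\sum_(j <- js) #|B j|)%N.
Proof.
elim: js => [|j js IH] /=; first by rewrite !big_nil cards0.
case/andP => /allP dj /IH {}IH; rewrite !big_cons -IH.
suff dU : [disjoint B j & \bigcup_(i <- js) B i] by apply/eqP; rewrite (leq_card_setU _ _).2.
rewrite big_seq; elim/big_ind: _ => [|X Y dX dY|i /dj //].
  by rewrite -finset.setI_eq0 finset.setI0.
by rewrite -finset.setI_eq0 finset.setIUr finset.setU_eq0 !finset.setI_eq0 dX dY.
Qed.

Lemma greedy_packing (I T : finType) (blk : I -> {set T}) (d : nat) (C : {set I}) :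
  (forall j, j \in C -> blk j != finset.set0) ->
  (forall e, e \in C -> #|[set j in C | ~~ [disjoint blk j & blk e]]| <= d)%N ->
  exists js : seq I, [/\ {subset js <= C},
    pairwise (fun i j => [disjoint blk i & blk j]) js & (#|C| <= d * size js)%N].
Proof.
move=> blk_neq0 nb_le; move: {2}#|C| (leqnn #|C|) => n.
elim: n C blk_neq0 nb_le => [|n IH] C blk_neq0 nb_le leCn.
  by exists [::]; split=> //; rewrite leqn0 in leCn; rewrite (eqP leCn).
have [->|[j jC]] := finset.set_0Vmem C; first by exists [::]; rewrite cards0.
pose far := [set i | [disjoint blk i & blk j]].
have nb_j : (0 < #|C :\: far| <= d)%N.
  apply/andP; split.
    apply/card_gt0P; exists j; rewrite !inE jC andbT -finset.setI_eq0 finset.setIid.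
    exact: blk_neq0.
  apply: leq_trans (nb_le j jC); apply: subset_leq_card.
  by apply/fintype.subsetP => i; rewrite !inE => /andP[-> ->].
have [|||js [jsC pjs le_far]] := IH (C :&: far).
- by move=> i; rewrite inE => /andP[/blk_neq0].
- move=> e; rewrite inE => /andP[/nb_le + _]; apply: leq_trans; apply: subset_leq_card.
  by apply/fintype.subsetP => i; rewrite !inE => /andP[/andP[-> _] ->].
- by rewrite -ltnS (leq_trans _ leCn) // -(cardsID far C) -addn1 leq_add2l; case/andP: nb_j.
exists (j :: js); split => /=.
- by move=> i; rewrite inE => /orP[/eqP ->//|/jsC]; rewrite inE => /andP[].
- rewrite pjs andbT; apply/allP => i /jsC; rewrite !inE => /andP[_].
  by rewrite disjoint_sym.
- by rewrite -(cardsID far C) mulnS addnC leq_add //; case/andP: nb_j.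
Qed.

Section RestrictionCount.
Variables (T Q : finType) (q0 : Q).
Implicit Types (S : {set {ffun T -> Q}}) (D : {set T}) (f p : {ffun T -> Q}).

Definition restrict D f : {ffun T -> Q} := [ffun x => if x \in D then f x else q0].

Definition restrict_set S D := [set restrict D f | f in S].

Lemma restrict_subset D D' f : D \subset D' -> restrict D (restrict D' f) = restrict D f.
Proof.
by move=> /fintype.subsetP sD; apply/ffunP => x; rewrite !ffunE; case: ifP => // /sD ->.
Qed.

Lemma restrict_setT S : restrict_set S [set: T] = S.
Proof.
have rT f : restrict [set: T] f = f by apply/ffunP => x; rewrite ffunE inE.
by rewrite /restrict_set (eq_imset _ rT) imset_id.
Qed.

Lemma restrict_set_pffun_on S D : restrict_set S D \subset pffun_on q0 D [set: Q].
Proof.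
apply/fintype.subsetP => _ /imsetP[f _ ->]; apply/pffun_onP; split=> [|y _]; last by rewrite inE.
by apply/fintype.subsetP => x; rewrite inE ffunE; case: ifP => //; rewrite eqxx.
Qed.

Lemma card_restrict_set S D : (#|restrict_set S D| <= #|Q| ^ #|D|)%N.
Proof.
rewrite -cardsT -(card_pffun_on q0); exact/subset_leq_card/restrict_set_pffun_on.
Qed.

Lemma card_restrict_set_avoid S D p :
  (forall f, f \in S -> exists2 x, x \in D & f x != p x) ->
  (#|restrict_set S D| <= #|Q| ^ #|D| - 1)%N.
Proof.
move=> Sp; rewrite -cardsT -(card_pffun_on q0).
have pD : restrict D p \in pffun_on q0 D [set: Q].
  by apply: (fintype.subsetP (restrict_set_pffun_on [set p] D)); rewrite imset_f ?inE.
rewrite [X in _ <= X - _](cardD1 (restrict D p)) pD add1n subn1 /=; apply: subset_leq_card.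
apply/fintype.subsetP => g gS; rewrite inE (fintype.subsetP (restrict_set_pffun_on S D) g gS) andbT.
apply: contraTneq gS => ->; apply/imsetP => -[f /Sp[x xD fpx]] /ffunP/(_ x).
by rewrite !ffunE xD => epx; rewrite epx eqxx in fpx.
Qed.

Lemma card_restrict_setU S D1 D2 :
  (#|restrict_set S (D1 :|: D2)| <= #|restrict_set S D1| * #|restrict_set S D2|)%N.
Proof.
rewrite -cardsX.
have inj : {in restrict_set S (D1 :|: D2) &,
    injective (fun g => (restrict D1 g, restrict D2 g))}.
  move=> _ _ /imsetP[f _ ->] /imsetP[f' _ ->] [/ffunP e1 /ffunP e2].
  apply/ffunP => x; move: (e1 x) (e2 x).
  by rewrite !ffunE !inE; case: (x \in D1); case: (x \in D2).
rewrite -(card_in_imset inj); apply/subset_leq_card/fintype.subsetP.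
move=> _ /imsetP[_ /imsetP[f fS ->] ->].
by rewrite inE !restrict_subset ?finset.subsetUl ?finset.subsetUr //= !imset_f.
Qed.

Variables (I : eqType) (blk : I -> {set T}) (pat : I -> {ffun T -> Q}) (a : nat).

Definition avoids_blocks S (js : seq I) := forall j, j \in js ->
  #|blk j| = a /\ forall f, f \in S -> exists2 x, x \in blk j & f x != pat j x.

Lemma card_restrict_set_blocks S js D : avoids_blocks S js ->
  (#|restrict_set S (D :|: \bigcup_(j <- js) blk j)| <=
    #|Q| ^ #|D| * (#|Q| ^ a - 1) ^ size js)%N.
Proof.
elim: js D => [|j js IH] D Sjs; first by rewrite big_nil finset.setU0 muln1 card_restrict_set.
rewrite big_cons finset.setUCA /= expnS mulnCA.
have [ca Sj] := Sjs j (mem_head _ _).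
apply: leq_trans (card_restrict_setU _ _ _) (leq_mul _ _).
  by rewrite -ca; exact: card_restrict_set_avoid Sj.
by apply: IH => i ijs; apply: Sjs; rewrite inE ijs orbT.
Qed.

Lemma card_bigcup_blocks js : {in js, forall j, #|blk j| = a} ->
  pairwise (fun i j => [disjoint blk i & blk j]) js ->
  #|\bigcup_(j <- js) blk j| = a * size js.
Proof.
move=> blk_a djs; rewrite card_bigcup_seq_disjoint // big_seq (eq_bigr (fun => a)) //.
by rewrite -big_seq big_const_seq count_predT iter_addn_0.
Qed.

Lemma card_avoiding_blocks S js : avoids_blocks S js ->
  pairwise (fun i j => [disjoint blk i & blk j]) js ->
  (#|S| <= #|Q| ^ (#|T| - a * size js) * (#|Q| ^ a - 1) ^ size js)%N.
Proof.
move=> Sjs djs; have := card_restrict_set_blocks (~: \bigcup_(j <- js) blk j) Sjs.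
rewrite finset.setUC finset.setUCr restrict_setT [#|~: _|]cardsCs finset.setCK.
by rewrite card_bigcup_blocks // => j /Sjs[].
Qed.

End RestrictionCount.

Local Open Scope classical_set_scope.
Local Open Scope ring_scope.

Section GroupTheory.
Variable G : group.
Implicit Types x y : G.

Lemma gmulxV x : gmul x (ginv x) = gone G.
Proof.
rewrite -[gmul x _]gmul1 -{1}(gmulV (ginv x)) -gmulA (gmulA (ginv x) x).
by rewrite gmulV gmul1 gmulV.
Qed.

Lemma gmulx1 x : gmul x (gone G) = x.
Proof. by rewrite -(gmulV x) gmulA gmulxV gmul1. Qed.

Lemma ginvK x : ginv (ginv x) = x.
Proof. by rewrite -[ginv (ginv x)]gmulx1 -(gmulV x) gmulA gmulV gmul1. Qed.

Lemma gmulKV x y : gmul x (gmul (ginv x) y) = y.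
Proof. by rewrite gmulA gmulxV gmul1. Qed.

Lemma gmulIg (z : G) : injective (fun x : G => gmul x z).
Proof.
by move=> x y /(congr1 (fun w => gmul w (ginv z))); rewrite -!gmulA gmulxV !gmulx1.
Qed.

End GroupTheory.

Section CellSpaceTheory.
Variable R : cell_space.
Local Notation G := (csG R).
Local Notation M := (csM R).
Local Notation m0 := (cm0 R).

Lemma cactK (g : G) : cancel (cact g) (cact (ginv g)).
Proof. by move=> x; rewrite -cactM gmulV cact1. Qed.

Lemma cact_inj (g : G) : injective (cact g).
Proof. exact: can_inj (cactK g). Qed.

Lemma stab1 : stab R (gone G).
Proof. exact: cact1. Qed.

Lemma stabV (g : G) : stab R g -> stab R (ginv g).
Proof. by rewrite /stab/= => gm0; rewrite -{1}gm0 cactK. Qed.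

Lemma cact_crepr (c : coset R) (g : G) : proj1_sig c = lcoset g ->
  cact (crepr c) m0 = cact g m0.
Proof.
have -> : proj1_sig c = lcoset (crepr c) by rewrite /crepr; case: cid.
move=> e; have : lcoset (crepr c) g.
  by rewrite e; exists (gone G); split; [exact: stab1 | rewrite gmulx1].
by case=> g0 [g0m0 ->]; rewrite cactM g0m0.
Qed.

Lemma rsaE (m : M) (c : coset R) : rsa m c = cact (cg m) (cact (crepr c) m0).
Proof. exact: cactM. Qed.

Lemma rsa_coset_act (m : M) (g : G) (c : coset R) :
  rsa m (coset_act g c) = cact (cg m) (cact g (cact (crepr c) m0)).
Proof. by rewrite rsaE (@cact_crepr (coset_act g c) _ erefl) !cactM. Qed.

Definition coset_of (g : G) : coset R := exist _ (lcoset g) (ex_intro _ g erefl).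

Lemma rsa_coset_of (m : M) (g : G) : rsa m (coset_of g) = cact (cg m) (cact g m0).
Proof. by rewrite rsaE (@cact_crepr (coset_of g) _ erefl). Qed.

Variables (Q : Type) (N : set (coset R)) (delta : ({n | N n} -> Q) -> Q).
Hypothesis delta_inv : bullet_invariant delta.

Lemma global_cact (c : M -> Q) (g : G) (x : M) :
  global delta (c \o cact g) x = global delta c (cact g x).
Proof.
rewrite /global; set x' := cact g x.
(* [h] fixes [m0] and carries the neighbourhood of [x] onto that of [g x]. *)
pose h := gmul (ginv (cg x')) (gmul g (cg x)).
have h_stab : stab R h by rewrite /stab /= /h !cactM cgP -/x' -{2}(cgP x') cactK.
apply: (delta_inv (stabV h_stab)) => n _ ->.
by rewrite rsa_coset_act ginvK !rsaE /h -!cactM /= gmulKV -gmulA [in RHS]cactM.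
Qed.

Lemma range_global_cact (y : M -> Q) (g : G) :
  range (global delta) y -> range (global delta) (y \o cact g).
Proof.
by case=> c _ <-; exists (c \o cact g) => //; apply/funext => z; rewrite /= global_cact.
Qed.

End CellSpaceTheory.

Lemma ultra_finite_value (T : Type) (Q : finType) (U : set_system T) (f : T -> Q) :
  UltraFilter U -> exists q, U [set t | f t = q].
Proof.
move=> UU; apply: contrapT => /forallNP notU.
suff /filter_ex[t /=] : U [set t | f t \notin enum Q] by rewrite mem_enum.
elim: (enum Q) => [|q s IH]; first exact: filterS filterT.
have [/notU[]|Uneq] := in_ultra_setVsetC [set t | f t = q] UU.
by apply: filterS (filterI Uneq IH) => t [fq fs]; rewrite /= in_cons negb_or fs andbT; apply/eqP.
Qed.

Lemma filter_forall_finite (T I : Type) (F : set_system T) (B : set I) (P : I -> set T) :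
  Filter F -> finite_set B -> (forall b, B b -> F (P b)) ->
  F [set t | forall b, B b -> P b t].
Proof.
move=> FF finB FP; have := @filter_bigI T {classic I} (fset_set (B : set {classic I})) P F FF.
rewrite fset_setK //; apply=> b; rewrite in_fset_set // in_setE; exact: FP.
Qed.

Section GardenOfEden.
Variable R : cell_space.
Local Notation M := (csM R).
Variables (Q : finType) (N : set (coset R)) (delta : ({n | N n} -> Q) -> Q).
Hypothesis finN : finite_set N.

(* Compactness of [Q^M]: an ultrafilter refining the net of finite subsets of
   [M] glues the local preimages into a global one. *)
Lemma global_of_locally_global (d : M -> Q) :
  (forall A : set M, finite_set A -> exists c, forall a, A a -> global delta c a = d a) ->
  exists c, global delta c = d.
Proof.
move=> loc.
have loc_all A : exists c, finite_set A -> forall a, A a -> global delta c a = d a.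
  have [/loc[c cP]|infA] := pselect (finite_set A); first by exists c.
  by exists d => /infA.
have [cA cAP] := choice loc_all.
pose above (B : set M) : set (set M) := [set A | finite_set A /\ B `<=` A].
have Fabove : ProperFilter (filter_from finite_set above).
  apply: filter_from_proper => [|B finB]; last by exists B; split.
  apply: filter_from_filter => [|B B' finB finB']; first by exists set0; exact: finite_set0.
  exists (B `|` B'); first by rewrite finite_setU.
  by move=> A [finA BB'A]; split; split=> // m Bm; apply: BB'A; [left|right].
have [U [UU sU]] := ultraFilterLemma Fabove.
have [c cP] := choice (fun m => @ultra_finite_value _ _ U (cA^~ m) UU).
exists c; apply/funext => m.
pose Bm := [set rsa m n | n in N] `|` [set m].
have finBm : finite_set Bm.
  by rewrite finite_setU; split; [exact: finite_image | exact: finite_set1].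
have Uagree : U [set A | forall b, Bm b -> cA A b = c b].
  exact: (filter_forall_finite _ finBm (fun b _ => cP b)).
have Uabove : U (above Bm) by apply: sU; exists Bm.
have [A [[finA BmA] agree]] := filter_ex (filterI Uabove Uagree).
rewrite -(cAP A finA m); last by apply: BmA; right.
by congr delta; apply/funext => n; rewrite agree //; left; exists (sval n) => //; exact: svalP.
Qed.

Lemma orphan_pattern : ~ (forall d : M -> Q, exists c, global delta c = d) ->
  exists A : set M, finite_set A /\ exists p : M -> Q,
    forall c : M -> Q, exists a, A a /\ global delta c a <> p a.
Proof.
move=> nsurj; apply: contrapT => no_orphan; apply: nsurj => d.
apply: global_of_locally_global => A finA; apply: contrapT => /forallNP nloc.
apply: no_orphan; exists A; split=> //; exists d => c.
by have /existsNP[a /not_implyP[Aa ne]] := nloc c; exists a.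
Qed.

End GardenOfEden.

Lemma fincard_eq (T : Type) (A : set T) n : (A #= `I_n)%card -> fincard A = n.
Proof.
move=> An; apply: xget_unique => // m Am.
by apply/card_eq_II; exact: card_eq_trans (card_esym Am) An.
Qed.

Lemma fincard_card_eq (T U : Type) (A : set T) (B : set U) :
  (A #= B)%card -> fincard A = fincard B.
Proof.
move=> AB; rewrite /fincard; congr xget; apply/funext => n; apply/propext.
by split=> [An|Bn]; [exact: card_eq_trans (card_esym AB) An | exact: card_eq_trans AB Bn].
Qed.

Lemma fincard_finset (T : finType) (W : {set T}) : fincard [set` W] = #|W|.
Proof.
apply: fincard_eq; have -> : [set` W] = [set` [fset x in W]%fset].
  by apply/funext => x; apply/propext; rewrite /= !inE.
by apply/card_eq_fsetP; rewrite card_finset.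
Qed.

Lemma fincard_inj_image (T U : Type) (A : set T) (f : T -> U) :
  {in A &, injective f} -> fincard (f @` A) = fincard A.
Proof. by move=> f_inj; apply: fincard_card_eq; exact: inj_card_eq. Qed.

Lemma subset_leq_fincard (T : Type) (A B : set T) :
  finite_set B -> A `<=` B -> (fincard A <= fincard B)%N.
Proof.
move=> finB AB; have /finite_setP[m Am] := sub_finite_set AB finB.
have /finite_setP[n Bn] := finB.
rewrite (fincard_eq Am) (fincard_eq Bn) -card_le_II.
by rewrite -(card_le_eql Am) -(card_le_eqr Bn); exact: subset_card_le.
Qed.

Lemma fincard_gt0 (T : Type) (A : set T) : finite_set A -> A !=set0 -> (0 < fincard A)%N.
Proof.
move=> /finite_setP[[|n] An] [x Ax]; last by rewrite (fincard_eq An).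
by move: An; rewrite II0 card_eq0 => /eqP A0; rewrite A0 in Ax.
Qed.

Definition almost_invariant (R : cell_space) (F0 : set (csM R)) (TA : finType)
    (eA : TA -> csM R) (c : nat) :=
  forall t, (c * fincard (F0 `\` [set m | F0 (cact (cg m) (eA t))]) < fincard F0)%N.

Section FolnerWindow.
Variable R : cell_space.
Local Notation M := (csM R).
Variables (Q : finType) (X : set (M -> Q)) (TA : finType) (eA : TA -> M) (p : M -> Q).
Hypotheses (X_neq0 : X !=set0) (eA_inj : injective eA) (fin_stab : finite_set (stab R)).
Hypothesis X_orphan : forall m y, X y -> exists t, y (cact (cg m) (eA t)) != p (eA t).

Let a := #|TA|.
Let s := fincard (stab R).

Lemma card_pattern_gt0 : (0 < a)%N.
Proof.
by have [y /(X_orphan (cm0 R))[t _]] := X_neq0; apply/card_gt0P; exists t.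
Qed.

Lemma card_cact_fiber (T : finType) (u : T -> M) (x b : M) : injective u ->
  (#|[set j | `[< cact (cg (u j)) x = b >]]%SET| <= s)%N.
Proof.
move=> u_inj; set W := finset _.
(* [j] is determined by the stabiliser element [g_b^-1 g_(u j) g_x]. *)
pose f j := gmul (ginv (cg b)) (gmul (cg (u j)) (cg x)).
have f_inj : {in [set` W] &, injective f}.
  move=> j j' _ _ /(congr1 (gmul (cg b))); rewrite !gmulKV => /gmulIg e.
  by apply: u_inj; rewrite -(cgP (u j)) -(cgP (u j')) e.
rewrite -fincard_finset -(fincard_inj_image f_inj) subset_leq_fincard //.
move=> g [j /=]; rewrite inE => /asboolP jx <-.
by rewrite /stab /= /f !cactM cgP jx -{2}(cgP b) cactK.
Qed.

Variable F0 : set M.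
Hypothesis finF0 : finite_set F0.

Let cell := fset_sub_type (fset_set (F0 : set {classic M})).
Let v (j : cell) : M := fsval j.

Let v_inj : injective v.
Proof. exact: val_inj. Qed.

Let F0_v (j : cell) : F0 (v j).
Proof. by have := fsvalP j; rewrite in_fset_set // in_setE. Qed.

Let v_onto m : F0 m -> exists j, v j = m.
Proof.
move=> F0m; have mF0 : (m : {classic M}) \in fset_set (F0 : set {classic M}).
  by rewrite in_fset_set // in_setE.
by exists (FSetSub mF0).
Qed.

Let fincard_v_image (W : {set cell}) : fincard (v @` [set` W]) = #|W|.
Proof. by rewrite fincard_inj_image ?fincard_finset // => j j' _ _ /v_inj. Qed.

Let fincard_F0I (P : set M) : fincard (F0 `&` P) = #|[set j | `[< P (v j) >]]%SET|.
Proof.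
rewrite -fincard_v_image; congr fincard; apply/seteqP; split=> [m [/v_onto[j <-] Pj]|m [j]].
  by exists j; rewrite //= inE; apply/asboolP.
by rewrite /= inE => /asboolP Pj <-.
Qed.

Let fincard_F0 : fincard F0 = #|cell|.
Proof.
have := fincard_F0I setT; rewrite setIT => ->.
by apply: eq_card => j; rewrite !inE; apply/asboolP.
Qed.

Definition patch (j : cell) : {set cell} :=
  [set j' | `[< exists t, v j' = cact (cg (v j)) (eA t) >]]%SET.

Definition interior : {set cell} :=
  [set j | `[< forall t, F0 (cact (cg (v j)) (eA t)) >]]%SET.

Definition shifted_pattern (j : cell) : {ffun cell -> Q} :=
  [ffun x => p (cact (ginv (cg (v j))) (v x))].

Definition traces : {set {ffun cell -> Q}} :=
  [set f : {ffun cell -> Q} | `[< exists2 y, X y & forall x, f x = y (v x) >]]%SET.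

Lemma card_patch j : j \in interior -> #|patch j| = a.
Proof.
rewrite inE => /asboolP jI; rewrite -fincard_v_image /a -cardsT -fincard_finset.
rewrite -(@fincard_inj_image _ _ _ (fun t => cact (cg (v j)) (eA t))); last first.
  by move=> t t' _ _ /cact_inj/eA_inj.
congr fincard; apply/seteqP; split=> [m [j' /=]|m [t _ <-]].
  by rewrite inE => /asboolP[t ->] <-; exists t; rewrite /= ?inE.
have [j' vj'] := v_onto (jI t); exists j' => //.
by rewrite /= inE; apply/asboolP; exists t.
Qed.

Lemma traces_avoid j : j \in interior ->
  forall f, f \in traces -> exists2 x, x \in patch j & f x != shifted_pattern j x.
Proof.
rewrite inE => /asboolP jI f; rewrite inE => /asboolP[y /(X_orphan (v j))[t yt] fy].
have [x vx] := v_onto (jI t).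
exists x; first by rewrite inE; apply/asboolP; exists t.
by rewrite fy ffunE vx cactK.
Qed.

Lemma fincard_proj_set : fincard (@proj_set _ _ F0 X) = #|traces|.
Proof.
pose trace (r : {m | F0 m} -> Q) : {ffun cell -> Q} := [ffun x => r (exist _ (v x) (F0_v x))].
have trace_inj : {in @proj_set _ _ F0 X &, injective trace}.
  move=> r r' _ _ /ffunP e; apply/funext => -[m F0m].
  have [x vx] := v_onto F0m; subst m; move: (e x); rewrite !ffunE.
  by rewrite (Prop_irrelevance F0m (F0_v x)).
rewrite -(fincard_inj_image trace_inj) -fincard_finset; congr fincard.
apply/seteqP; split=> [_ [_ [y Xy <-] <-]|f].
  by rewrite /= inE; apply/asboolP; exists y => // x; rewrite ffunE.
rewrite /= inE => /asboolP[y Xy fy]; exists (@restr _ _ F0 y); first by exists y.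
by apply/ffunP => x; rewrite ffunE fy.
Qed.

Lemma fincard_proj_set_gt0 : (0 < fincard (@proj_set _ _ F0 X))%N.
Proof.
rewrite fincard_proj_set; apply/card_gt0P; have [y Xy] := X_neq0.
by exists [ffun x => y (v x)]; rewrite inE; apply/asboolP; exists y => // x; rewrite ffunE.
Qed.

Lemma card_interior :
  almost_invariant F0 eA (2 * a) ->
  (fincard F0 <= 2 * #|interior|)%N.
Proof.
move=> folner.
pose exits t := [set j | `[< ~ F0 (cact (cg (v j)) (eA t)) >]]%SET.
have exits_cover : ~: interior \subset (\bigcup_t exits t)%SET.
  apply/fintype.subsetP => j; rewrite !inE => /asboolP /existsNP[t jt].
  by apply/finset.bigcupP; exists t => //; rewrite inE; apply/asboolP.
have : (2 * a * #|~: interior| <= a * fincard F0)%N.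
  have le_exits := leq_trans (subset_leq_card exits_cover) (card_big_setU _ _ _).
  apply: leq_trans (leq_mul (leqnn (2 * a)) le_exits) _.
  rewrite big_distrr /= /a -sum_nat_const leq_sum // => t _.
  by have := folner t; rewrite setDE fincard_F0I => /ltnW.
rewrite -mulnA mulnCA leq_pmul2l ?card_pattern_gt0 // fincard_F0.
by rewrite -(cardsC interior); lia.
Qed.

Lemma card_overlapping_patches e :
  (#|[set j in interior | ~~ [disjoint patch j & patch e]]| <= a * a * s)%N.
Proof.
pose meet (tt : TA * TA) :=
  [set j | `[< cact (cg (v j)) (eA tt.1) = cact (cg (v e)) (eA tt.2) >]]%SET.
have meet_cover : [set j in interior | ~~ [disjoint patch j & patch e]]
    \subset (\bigcup_tt meet tt)%SET.
  apply/fintype.subsetP => j; rewrite !inE -finset.setI_eq0 => /andP[_ /finset.set0Pn[x]].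
  rewrite !inE => /andP[/asboolP[t ->] /asboolP[t' e_t']].
  by apply/finset.bigcupP; exists (t, t') => //; rewrite inE; apply/asboolP.
apply: leq_trans (subset_leq_card meet_cover) (leq_trans (card_big_setU _ _ _) _).
rewrite /a -card_prod -sum_nat_const leq_sum // => tt _.
exact: card_cact_fiber.
Qed.

Lemma window_count :
  almost_invariant F0 eA (2 * a) ->
  exists k, [/\ (fincard F0 <= 2 * (a * a * s) * k)%N, (a * k <= fincard F0)%N &
    (fincard (@proj_set _ _ F0 X) <= #|Q| ^ (fincard F0 - a * k) * (#|Q| ^ a - 1) ^ k)%N].
Proof.
move=> folner.
have patch_neq0 j : j \in interior -> patch j != finset.set0.
  by move=> /card_patch; rewrite -card_gt0 => ->; exact: card_pattern_gt0.
have [js [jsI djs le_int]] := greedy_packing patch_neq0 (fun e _ => card_overlapping_patches e).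
have avoid : avoids_blocks patch shifted_pattern a traces js.
  by move=> j /jsI jI; split; [exact: card_patch | exact: traces_avoid].
exists (size js); split.
- by rewrite -mulnA (leq_trans (card_interior folner)) // leq_mul2l le_int orbT.
- by rewrite fincard_F0 -(card_bigcup_blocks _ djs) ?max_card // => j /avoid[].
- by rewrite fincard_proj_set fincard_F0; move: (card_avoiding_blocks (p (cm0 R)) avoid djs).
Qed.

End FolnerWindow.

Section EntropyBound.
Variable K : realType.

Lemma ln_natrX (q e : nat) : (0 < q)%N -> ln ((q ^ e)%:R : K) = e%:R * ln q%:R.
Proof. by move=> q_gt0; rewrite natrX lnXn ?ltr0n // mulr_natl. Qed.

Lemma ln_expn_subn1_lt (q a : nat) : (1 < q)%N -> (0 < a)%N ->
  ln ((q ^ a - 1)%:R : K) < a%:R * ln q%:R.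
Proof.
move=> q_gt1 a_gt0; have qa_gt1 : (1 < q ^ a)%N by rewrite -(expn0 q) ltn_exp2l.
by rewrite -ln_natrX 1?ltr_ln ?posrE ?ltr0n ?ltr_nat; lia.
Qed.

Lemma ln_count_le (q a d n k C : nat) :
  (1 < q)%N -> (0 < a)%N -> (0 < n)%N -> (n <= d * k)%N -> (a * k <= n)%N ->
  (0 < C)%N -> (C <= q ^ (n - a * k) * (q ^ a - 1) ^ k)%N ->
  ln (C%:R : K) / n%:R <= ln q%:R - (a%:R * ln q%:R - ln (q ^ a - 1)%:R) / d%:R.
Proof.
move=> q_gt1 a_gt0 n_gt0 n_le a_le C_gt0 C_le.
have qa_gt1 : (1 < q ^ a)%N by rewrite -(expn0 q) ltn_exp2l.
have d_gt0 : (0 < d)%N by case: d n_le; lia.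
set L := ln q%:R; set beta := a%:R * L - _.
have beta_gt0 : 0 < beta by rewrite subr_gt0 ln_expn_subn1_lt.
have ln_count : ln ((q ^ (n - a * k) * (q ^ a - 1) ^ k)%N%:R : K) = n%:R * L - k%:R * beta.
  have qa1_gt0 : (0 < q ^ a - 1)%N by rewrite subn_gt0.
  rewrite natrM lnM ?posrE ?ltr0n ?expn_gt0 ?qa1_gt0 ?(ltnW q_gt1) //.
  rewrite !ln_natrX ?(ltnW q_gt1) //.
  by rewrite natrB // natrM /beta /L; ring.
have lnC : ln (C%:R : K) <= n%:R * L - k%:R * beta.
  by rewrite -ln_count ler_ln ?posrE ?ltr0n ?muln_gt0 ?expn_gt0 ?ler_nat; lia.
have nk : n%:R * beta / d%:R <= k%:R * beta.
  by rewrite ler_pdivrMr ?ltr0n // mulrAC ler_pM2r // -natrM ler_nat mulnC.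
rewrite ler_pdivrMr ?ltr0n //; lra.
Qed.

End EntropyBound.

Lemma translated_orphan_pattern (R : cell_space) (Q : finType) (N : set (coset R))
    (delta : ({n | N n} -> Q) -> Q) :
  bullet_invariant delta -> finite_set N ->
  ~ (forall d : csM R -> Q, exists c, global delta c = d) ->
  exists (TA : finType) (eA : TA -> csM R) (p : csM R -> Q), injective eA /\
    forall m y, range (global delta) y -> exists t, y (cact (cg m) (eA t)) != p (eA t).
Proof.
move=> delta_inv finN nsurj; have [A [finA [p orphan]]] := orphan_pattern finN nsurj.
pose TA := fset_sub_type (fset_set (A : set {classic (csM R)})).
exists TA, (fun t : TA => fsval t), p; split=> [|m y]; first exact: val_inj.
case/(range_global_cact delta_inv (cg m)) => c _ ec; have [x [Ax cx]] := orphan c.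
have xA : (x : {classic _}) \in fset_set (A : set {classic (csM R)}).
  by rewrite in_fset_set // in_setE.
by exists (FSetSub xA); apply/eqP; move: cx; rewrite ec.
Qed.

Lemma directed_ub_finite (I : Type) (le : I -> I -> Prop) (T : finType) (f : T -> I) :
  directed le -> exists k, forall x, le (f x) k.
Proof.
case=> [[i0 _] _ le_trans le_ub].
suff [k kP] : exists k, forall x, x \in enum T -> le (f x) k.
  by exists k => x; apply: kP; rewrite mem_enum.
elim: (enum T) => [|x s [k kP]]; first by exists i0.
have [k' [xk' kk']] := le_ub (f x) k; exists k' => y.
by rewrite in_cons => /orP[/eqP -> //|/kP yk]; exact: le_trans yk kk'.
Qed.

Lemma net_limsup_lt (K : realType) (I : Type) (le : I -> I -> Prop) (a : I -> K) (B L : K) :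
  (exists i0, forall i, le i0 i -> a i <= B) -> B < L -> (net_limsup le a < L%:E)%E.
Proof.
move=> [i0 a_le] BL; apply: (le_lt_trans _ (_ : B%:E < L%:E)%E); last by rewrite lte_fin.
apply: le_trans (ereal_inf_lbound _) _; first by exists i0.
by apply: ge_ereal_sup => _ [i i0i <-]; rewrite lee_fin a_le.
Qed.

Lemma folner_patches (K : realType) (R : cell_space) (I : Type) (le : I -> I -> Prop)
    (F : I -> set (csM R)) (TA : finType) (eA : TA -> csM R) (c : nat) :
  directed le -> right_folner K le F -> (0 < c)%N ->
  exists i0, forall i, le i0 i -> almost_invariant (F i) eA c.
Proof.
move=> dirI [F_fin folner] c_gt0.
have eventually_t t : exists i0, forall i, le i0 i ->
    (c * fincard (F i `\` [set m | F i (cact (cg m) (eA t))]) < fincard (F i))%N.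
  have c_inv_gt0 : (0 : K) < c%:R^-1 by rewrite invr_gt0 ltr0n.
  have [i0 i0P] := folner (coset_of (cg (eA t))) _ c_inv_gt0.
  exists i0 => i /i0P; have [finFi Fi_neq0] := F_fin i.
  have Fi_gt0 := fincard_gt0 finFi Fi_neq0.
  under eq_set => m do rewrite rsa_coset_of cgP.
  rewrite ger0_norm ?divr_ge0 // ltr_pdivrMr ?ltr0n // mulrC ltr_pdivlMr ?ltr0n //.
  by rewrite -natrM ltr_nat mulnC.
have [it itP] := choice eventually_t.
have [i0 i0P] := directed_ub_finite it dirI.
have [_ _ le_trans _] := dirI.
by exists i0 => i i0i t; apply: itP; exact: le_trans (i0P t) i0i.
Qed.

Theorem theorem4 (K : realType) (R : cell_space)
  (Q : finType) (N : set (coset R))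
  (delta : ({n | N n} -> Q) -> Q)
  (I : Type) (le : I -> I -> Prop) (F : I -> set (csM R)) :
  right_amenable R K ->
  finite_set (stab R) ->
  finite_set N ->
  (forall g0 n, stab R g0 -> N n -> N (coset_act g0 n)) ->
  directed le ->
  right_folner K le F ->
  bullet_invariant delta ->
  (1 < #|Q|)%N ->
  ~ (forall d : csM R -> Q, exists c, global delta c = d) ->
  (entropy K le F (range (global delta)) < (ln (#|Q|%:R : K))%:E)%E.
Proof.
move=> _ fin_stab finN _ dirI folnerF delta_inv Q_gt1 nsurj.
have [TA [eA [p [eA_inj orphan]]]] := translated_orphan_pattern delta_inv finN nsurj.
have X_neq0 : range (global delta) !=set0 by exists (global delta p), p.
have a_gt0 := card_pattern_gt0 X_neq0 orphan.
have s_gt0 : (0 < fincard (stab R))%N by apply: fincard_gt0 => //; exists (gone _); exact: stab1.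
have [i0 Fi0] : exists i0, forall i, le i0 i -> almost_invariant (F i) eA (2 * #|TA|).
  by apply: folner_patches dirI folnerF _; rewrite muln_gt0 a_gt0.
apply: (net_limsup_lt (B := ln #|Q|%:R - (#|TA|%:R * ln #|Q|%:R - ln (#|Q| ^ #|TA| - 1)%:R)
                                      / (2 * (#|TA| * #|TA| * fincard (stab R)))%:R)).
  exists i0 => i /Fi0 folner_i; have [finFi Fi_neq0] := folnerF.1 i.
  have [k [Fi_le ak_le trace_le]] := window_count X_neq0 eA_inj fin_stab orphan finFi folner_i.
  exact: ln_count_le Q_gt1 a_gt0 (fincard_gt0 finFi Fi_neq0) Fi_le ak_le
    (fincard_proj_set_gt0 X_neq0 finFi) trace_le.
by rewrite ltrBlDr ltrDl divr_gt0 ?subr_gt0 ?ln_expn_subn1_lt ?ltr0n ?muln_gt0 ?a_gt0.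
Qed.
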